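(* Let $n\ge 3$ and let $BW_n$ be the gear graph on $2n+1$ vertices. Then $\varphi(BW_n^2)=\frac{1}{2}[(n+1)^2+5]$ if $n$ is even and $\frac{1}{2}(n+1)^2$ if $n$ is odd; $\varphi(BW_n^3)=n(n+1)$ if $n$ is even and $\frac{1}{2}(2n^2+3n+3)$ if $n$ is odd; $\varphi(BW_n^4)=n(2n-1)$.
   Context: All graphs are finite, simple and without isolated vertices. $\mathbb{N}_0$ denotes the set of non-negative integers; for finite $A,B\subseteq\mathbb{N}_0$, $A+B=\{a+b: a\in A, b\in B\}$. An integer additive set-indexer (IASI) of a graph $G$ is an injective map $f$ from $V(G)$ to the finite non-empty subsets of $\mathbb{N}_0$ such that the induced edge map $f^+(uv)=f(u)+f(v)$ is injective on $E(G)$. A weak IASI (WIASI) is an IASI $f$ with $|f^+(uv)|=\max(|f(u)|,|f(v)|)$ for every edge $uv$ (equivalently, for every edge at least one end vertex has a singleton label). A vertex or edge is mono-indexed if its set-label has cardinality $1$. Every graph admits a WIASI. The sparing number $\varphi(G)$ is the minimum, over all WIASIs of $G$, of the number of mono-indexed edges of $G$. The $r$-th power $G^r$ has vertex set $V(G)$, two distinct vertices being adjacent iff their distance in $G$ is at most $r$. The gear graph (bipartite wheel) $BW_n$ is obtained from the wheel $C_n+K_1$ (hub $u$, rim cycle $v_1v_2\cdots v_nv_1$) by inserting a new vertex $w_i$ on each rim edge $v_iv_{i+1}$ (indices mod $n$); thus $u$ is adjacent to each $v_i$, and $w_i$ is adjacent exactly to $v_i$ and $v_{i+1}$. *)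

From mathcomp Require Import all_boot.
Set Implicit Arguments. Unset Strict Implicit. Unset Printing Implicit Defensive.

(* Finite subsets of N0 are represented
   by sequences of naturals, compared as sets (=i); their cardinality is
   the number of distinct entries. *)

Definition scard (A : seq nat) : nat := size (undup A).

Definition sumset (A B : seq nat) : seq nat := [seq a + b | a <- A, b <- B].

Definition is_IASI (T : finType) (adj : rel T) (f : T -> seq nat) : Prop :=
  [/\ (forall x, f x != [::]),
      (forall x y, f x =i f y -> x = y) &
      (forall u v x y, adj u v -> adj x y ->
         sumset (f u) (f v) =i sumset (f x) (f y) ->
         (u = x /\ v = y) \/ (u = y /\ v = x))].

Definition is_WIASI (T : finType) (adj : rel T) (f : T -> seq nat) : Prop :=
  is_IASI adj f /\
  (forall u v, adj u v ->
     scard (sumset (f u) (f v)) = maxn (scard (f u)) (scard (f v))).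

(* number of (unordered) mono-indexed edges: ordered adjacent pairs with
   singleton edge label, halved (adj is symmetric). *)
Definition mono_edges (T : finType) (adj : rel T) (f : T -> seq nat) : nat :=
  (#|[set p : T * T | adj p.1 p.2 && (scard (sumset (f p.1) (f p.2)) == 1)]|)./2.

Definition sparing_number_is (T : finType) (adj : rel T) (k : nat) : Prop :=
  (exists f, is_WIASI adj f /\ mono_edges adj f = k) /\
  (forall f, is_WIASI adj f -> k <= mono_edges adj f).

Fixpoint dist_le (T : finType) (adj : rel T) (r : nat) (x y : T) : bool :=
  match r with
  | 0 => x == y
  | r'.+1 => dist_le adj r' x y || [exists z, adj x z && dist_le adj r' z y]
  end.

Definition graph_pow (T : finType) (adj : rel T) (r : nat) : rel T :=
  fun x y => (x != y) && dist_le adj r x y.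

(* Gear graph BW_n: None = hub u, Some (inl i) = v_i, Some (inr i) = w_i
   (indices 0..n-1, mod n); w_i adjacent to v_i and v_{i+1}. *)
Definition gear_vertex (n : nat) : finType := option ('I_n + 'I_n)%type.

Definition gear_adj (n : nat) : rel (gear_vertex n) :=
  fun x y =>
    match x, y with
    | None, Some (inl _) => true
    | Some (inl _), None => true
    | Some (inl i), Some (inr j) => (val i == val j) || (val i == (val j).+1 %% n)
    | Some (inr j), Some (inl i) => (val i == val j) || (val i == (val j).+1 %% n)
    | _, _ => false
    end.

(* In a weak IASI every edge has an end with a singleton label, so the vertices
   with larger labels form an independent set I, and the mono-indexed edges are
   exactly the edges avoiding I.  Conversely every independent set arises this
   way, from labels built on powers of two.  Double counting adjacent pairs gives
     2 phi(G) = sum_x deg x - 2 max { sum_(x in I) deg x | I independent }.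
   For r >= 2 the hub of BW_n^r is adjacent to every vertex and the v_i are
   pairwise adjacent, so an independent set is {u}, or at most one v_k together
   with w_j's pairwise at distance > r; for r = 2 these w_j also avoid the two
   neighbours of v_k, for r = 3 they cannot occur next to a v_k, and BW_n^4 is
   complete.  Counting around the rim, at most n/2 of the w_j (at most (n-1)/2
   beside a v_k) fit, and alternate w_j's attain the bound. *)

From mathcomp Require Import all_boot zify.

Set Implicit Arguments.
Unset Strict Implicit.
Unset Printing Implicit Defensive.

Lemma eq_scard (A B : seq nat) : A =i B -> scard A = scard B.
Proof.
move=> eqAB; apply/eqP; rewrite eqn_leq /scard.
by rewrite !uniq_leq_size ?undup_uniq // => x; rewrite !mem_undup eqAB.
Qed.

Lemma scard_gt0 (A : seq nat) : A != [::] -> 0 < scard A.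
Proof. by rewrite /scard lt0n size_eq0; apply: contra => /eqP/undup_nil ->. Qed.

Lemma scard_gt1P (A : seq nat) :
  1 < scard A -> exists a1 a2, [/\ a1 \in A, a2 \in A & a1 < a2].
Proof.
rewrite /scard => A_gt1; set a := nth 0 (undup A) 0; set b := nth 0 (undup A) 1.
have Aa : a \in A by rewrite -mem_undup mem_nth //; lia.
have Ab : b \in A by rewrite -mem_undup mem_nth.
have : a != b by rewrite nth_uniq ?undup_uniq //; lia.
by case: (ltngtP a b) => [ab _|ba _|//]; [exists a, b | exists b, a].
Qed.

Lemma sumsetC (A B : seq nat) : sumset A B =i sumset B A.
Proof.
by move=> x; apply/allpairsP/allpairsP => -[[a b] /= [Aa Bb ->]];
  exists (b, a); rewrite addnC.
Qed.

Lemma exists_max_seq (A : seq nat) :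
  A != [::] -> exists2 m, m \in A & forall a, a \in A -> a <= m.
Proof.
elim: A => // a A IHA _; have [->|/IHA[m Am maxm]] := eqVneq A [::].
  by exists a => [|x]; rewrite mem_seq1 // => /eqP->.
exists (maxn a m).
  by case: (leqP a m) => _; rewrite inE ?Am ?eqxx ?orbT.
by move=> x; rewrite inE leq_max => /predU1P[->|/maxm->]; rewrite ?leqnn ?orbT.
Qed.

(* The shifts a + b1 (a in A) together with (max A) + b2 are distinct. *)
Lemma scard_sumset_gt (A B : seq nat) b1 b2 :
  A != [::] -> b1 \in B -> b2 \in B -> b1 < b2 -> scard A < scard (sumset A B).
Proof.
move=> /exists_max_seq[m Am maxm] Bb1 Bb2 b12; rewrite /scard.
rewrite -(size_map (addn^~ b1)) -ltnS -/(size ((m + b2) :: _)) ltnS.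
apply: uniq_leq_size => [|x].
  rewrite /= (map_inj_uniq (@addIn b1)) undup_uniq andbT.
  by apply/mapP => -[a]; rewrite mem_undup => /maxm; lia.
rewrite inE mem_undup => /predU1P[->|/mapP[a]]; first exact: allpairs_f.
by rewrite mem_undup => Aa ->; apply: allpairs_f.
Qed.

Lemma scard_sumset1 (A : seq nat) b : scard (sumset A [:: b]) = scard A.
Proof. by rewrite /scard /sumset allpairs1r undup_map_inj ?size_map //; apply: addIn. Qed.

Lemma card_set_sum (T : finType) (P : pred T) : #|[set x | P x]| = \sum_x P x.
Proof. by rewrite -sum1_card big_mkcond; apply: eq_bigr => x _; rewrite inE; case: (P x). Qed.

Lemma expn2_add_sorted_inj i j k l : i < j -> k < l ->
  2 ^ i + 2 ^ j = 2 ^ k + 2 ^ l -> i = k /\ j = l.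
Proof.
have below a b c : a < b -> b < c -> 2 ^ a + 2 ^ b < 2 ^ c.
  move=> ab bc; have := ltn_exp2l a b (isT : 1 < 2); rewrite ab.
  by have := leq_exp2l b.+1 c (isT : 1 < 2); rewrite bc expnS; lia.
move=> ij kl eq_sum; have jl : j = l.
  by case: (ltngtP j l) => // [/(below _ _ _ ij)|/(below _ _ _ kl)]; lia.
by split=> //; subst l; apply: (expnI (isT : 1 < 2)); lia.
Qed.

Lemma expn2_add_inj i j k l : i != j -> k != l ->
  2 ^ i + 2 ^ j = 2 ^ k + 2 ^ l -> (i = k /\ j = l) \/ (i = l /\ j = k).
Proof.
case: (ltngtP i j) => // ij _; case: (ltngtP k l) => // kl _ eq_sum.
- by left; apply: expn2_add_sorted_inj ij kl eq_sum.
- by right; apply: (expn2_add_sorted_inj ij kl); rewrite eq_sum addnC.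
- by right; apply/and_comm; apply: (expn2_add_sorted_inj ij kl); rewrite addnC eq_sum.
- by left; apply/and_comm; apply: (expn2_add_sorted_inj ij kl); rewrite addnC eq_sum addnC.
Qed.

Section WeakSetIndexers.

Variables (T : finType) (adj : rel T).

Lemma WIASI_singleton_end f u v : is_WIASI adj f -> adj u v ->
  (scard (f u) == 1) || (scard (f v) == 1).
Proof.
move=> [[f_neq0 _ _] f_weak] uv; have := f_weak _ _ uv.
have := scard_gt0 (f_neq0 u); have := scard_gt0 (f_neq0 v).
case: eqP => [//|fu1] fv0 fu0; case: eqP => [//|fv1] /= eq_max.
have [b1 [b2 [Bb1 Bb2 b12]]] := @scard_gt1P (f v) ltac:(lia).
have [a1 [a2 [Aa1 Aa2 a12]]] := @scard_gt1P (f u) ltac:(lia).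
have := scard_sumset_gt (f_neq0 u) Bb1 Bb2 b12.
have := scard_sumset_gt (f_neq0 v) Aa1 Aa2 a12.
rewrite (eq_scard (sumsetC (f v) (f u))); lia.
Qed.

Lemma WIASI_mono_edge f u v : is_WIASI adj f -> adj u v ->
  (scard (sumset (f u) (f v)) == 1) = (scard (f u) == 1) && (scard (f v) == 1).
Proof.
move=> [[f_neq0 _ _] f_weak] uv; rewrite f_weak //.
have := scard_gt0 (f_neq0 u); have := scard_gt0 (f_neq0 v).
by case: (ltngtP (scard (f u)) (scard (f v))); lia.
Qed.

Definition independent (I : {set T}) := {in I &, forall x y, ~~ adj x y}.

Definition degree (x : T) := #|[set y | adj x y]|.

Definition degree_weight (I : {set T}) := \sum_(x in I) degree x.

Definition outer_pairs (I : {set T}) :=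
  #|[set p : T * T | [&& adj p.1 p.2, p.1 \notin I & p.2 \notin I]]|.

Lemma mono_edges_WIASI f : is_WIASI adj f ->
  mono_edges adj f = (outer_pairs [set x | scard (f x) != 1])./2.
Proof.
move=> fW; congr (_./2); apply: eq_card => -[x y]; rewrite !inE /= !negbK.
by case xy: (adj x y); rewrite // (WIASI_mono_edge fW xy).
Qed.

Lemma card_pairs (P : T -> T -> bool) :
  #|[set p : T * T | P p.1 p.2]| = \sum_x \sum_y P x y.
Proof. by rewrite card_set_sum pair_big; apply: eq_bigr => -[]. Qed.

(* Double counting of ordered adjacent pairs: by independence, each one lies
   outside I or has exactly one end in I. *)
Lemma degree_weight_setT I : symmetric adj -> independent I ->
  degree_weight [set: T] = outer_pairs I + 2 * degree_weight I.
Proof.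
move=> adjC indI.
have weight_left J : degree_weight J = \sum_x \sum_y (x \in J) * adj x y.
  rewrite /degree_weight big_mkcond; apply: eq_bigr => x _.
  by rewrite /degree card_set_sum -big_distrr /=; case: (x \in J); rewrite ?mul1n ?mul0n.
have weight_right : degree_weight I = \sum_x \sum_y (y \in I) * adj x y.
  rewrite weight_left exchange_big; apply: eq_bigr => x _.
  by apply: eq_bigr => y _; rewrite adjC.
rewrite weight_left /outer_pairs.
rewrite (card_pairs (fun x y => [&& adj x y, x \notin I & y \notin I])).
rewrite mul2n -addnn {1}weight_left weight_right -!big_split; apply: eq_bigr => x _.
rewrite -!big_split; apply: eq_bigr => y _ /=; rewrite in_setT mul1n.
case xy: (adj x y); case Ix: (x \in I); case Iy: (y \in I) => //.
by have := indI x y Ix Iy; rewrite xy.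
Qed.

Lemma independent_WIASI f : is_WIASI adj f -> independent [set x | scard (f x) != 1].
Proof.
move=> fW x y; rewrite !inE => /negPf x1 /negPf y1.
by apply: contraFN (WIASI_singleton_end fW) _; rewrite x1 y1.
Qed.

(* Powers of two form a Sidon set, so 2^i + 2^j determines {i, j}; the second
   element of a label on I is shifted past all such sums. *)
Definition pow2_labelling (I : {set T}) (x : T) : seq nat :=
  2 ^ enum_rank x :: (if x \in I then [:: 2 ^ enum_rank x + 2 ^ #|T|.+1] else [::]).

Lemma pow2_labelling_mem I x z : z \in pow2_labelling I x ->
  exists b : bool, z = 2 ^ enum_rank x + b * 2 ^ #|T|.+1.
Proof.
rewrite inE => /predU1P[->|]; first by exists false; rewrite addn0.
by case: (x \in I); rewrite ?inE // => /eqP->; exists true; rewrite mul1n.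
Qed.

Lemma expn2_rank_sum_lt (x y : T) : 2 ^ enum_rank x + 2 ^ enum_rank y < 2 ^ #|T|.+1.
Proof.
have rank_lt (z : T) : 2 ^ enum_rank z < 2 ^ #|T| by rewrite ltn_exp2l.
by have := rank_lt x; have := rank_lt y; rewrite expnS; lia.
Qed.

Lemma expn2_rank_inj : injective (fun x : T => 2 ^ enum_rank x).
Proof. by move=> x y /(expnI (isT : 1 < 2))/val_inj/enum_rank_inj. Qed.

Lemma scard_pow2_labelling I x :
  scard (pow2_labelling I x) = if x \in I then 2 else 1.
Proof.
rewrite /pow2_labelling /scard; case: (x \in I) => //=.
by rewrite inE; case: eqP => //; rewrite expnS; lia.
Qed.

Lemma pow2_labelling_notin (I : {set T}) (x : T) :
  x \notin I -> pow2_labelling I x = [:: 2 ^ enum_rank x].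
Proof. by rewrite /pow2_labelling => /negPf->. Qed.

Lemma pow2_labelling_inj I x y : pow2_labelling I x =i pow2_labelling I y -> x = y.
Proof.
move=> eq_xy; apply: expn2_rank_inj => /=.
have /pow2_labelling_mem[[] eq_x] : 2 ^ enum_rank x \in pow2_labelling I y.
  by rewrite -eq_xy mem_head.
  by have := expn2_rank_sum_lt x x; rewrite mul1n in eq_x; lia.
by rewrite eq_x mul0n addn0.
Qed.

Lemma pow2_labelling_sumset I u v x y :
  sumset (pow2_labelling I u) (pow2_labelling I v) =i
  sumset (pow2_labelling I x) (pow2_labelling I y) ->
  2 ^ enum_rank u + 2 ^ enum_rank v = 2 ^ enum_rank x + 2 ^ enum_rank y.
Proof.
move=> eq_sums.
have /allpairsP[[a b] /= [xa yb sum_ab]] : 2 ^ enum_rank u + 2 ^ enum_rank v \in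
    sumset (pow2_labelling I x) (pow2_labelling I y).
  by rewrite -eq_sums; apply: allpairs_f; apply: mem_head.
have [bx ea] := pow2_labelling_mem xa; have [by' eb] := pow2_labelling_mem yb.
move: sum_ab (expn2_rank_sum_lt u v); rewrite {}ea {}eb.
move: (2 ^ enum_rank u) (2 ^ enum_rank v) (2 ^ enum_rank x) (2 ^ enum_rank y).
by move: (2 ^ #|T|.+1); case: bx; case: by' => /=; lia.
Qed.

Lemma pow2_labelling_WIASI I : irreflexive adj -> independent I ->
  is_WIASI adj (pow2_labelling I).
Proof.
move=> adj_irr indI; split; first split.
- by [].
- exact: pow2_labelling_inj.
- move=> u v x y uv xy /pow2_labelling_sumset.
  have rank_neq p q : adj p q -> enum_rank p != enum_rank q :> nat.
    by move=> pq; apply: contraTneq pq => /val_inj/enum_rank_inj->; rewrite adj_irr.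
  move/(expn2_add_inj (rank_neq _ _ uv) (rank_neq _ _ xy)).
  by case=> -[/val_inj/enum_rank_inj-> /val_inj/enum_rank_inj->]; [left | right].
move=> u v uv; rewrite !scard_pow2_labelling.
case uI: (u \in I); case vI: (v \in I).
- by have := indI u v uI vI; rewrite uv.
- by rewrite (pow2_labelling_notin (negbT vI)) scard_sumset1 scard_pow2_labelling uI.
- rewrite (eq_scard (sumsetC _ _)) (pow2_labelling_notin (negbT uI)).
  by rewrite scard_sumset1 scard_pow2_labelling vI.
- by rewrite !pow2_labelling_notin ?uI ?vI.
Qed.

Lemma sparing_number_from_weights k : irreflexive adj -> symmetric adj ->
  (exists2 I, independent I & 2 * k + 2 * degree_weight I = degree_weight [set: T]) ->
  (forall I, independent I -> 2 * k + 2 * degree_weight I <= degree_weight [set: T]) ->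
  sparing_number_is adj k.
Proof.
move=> adj_irr adjC [I indI optI] maxI; split.
  exists (pow2_labelling I); split; first exact: pow2_labelling_WIASI.
  rewrite mono_edges_WIASI; last exact: pow2_labelling_WIASI.
  have -> : [set x | scard (pow2_labelling I x) != 1] = I.
    by apply/setP => x; rewrite inE scard_pow2_labelling; case: (x \in I).
  have := degree_weight_setT adjC indI; rewrite -optI => outerI.
  have -> : outer_pairs I = k.*2 by rewrite -muln2; lia.
  exact: doubleK.
move=> f fW; rewrite mono_edges_WIASI //.
have := degree_weight_setT adjC (independent_WIASI fW).
have := maxI _ (independent_WIASI fW) => weightI outerJ.
by rewrite -[k]doubleK half_leq // -muln2; lia.
Qed.

End WeakSetIndexers.

Lemma dist_leS (T : finType) (adj : rel T) r x y :
  dist_le adj r.+1 x y = dist_le adj r x y || [exists z, adj x z && dist_le adj r z y].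
Proof. by []. Qed.

Lemma dist_le1 (T : finType) (adj : rel T) x y : dist_le adj 1 x y = (x == y) || adj x y.
Proof.
congr (_ || _); apply/existsP/idP => [[z /andP[xz /eqP <-]] //|xy].
by exists y; rewrite xy eqxx.
Qed.

Lemma dist_le_mono (T : finType) (adj : rel T) r s x y :
  r <= s -> dist_le adj r x y -> dist_le adj s x y.
Proof.
move=> /subnKC <-; elim: (s - r) => [|d IHd]; first by rewrite addn0.
by rewrite addnS dist_leS => /IHd->.
Qed.

Lemma dist_le_trans (T : finType) (adj : rel T) a b x z y :
  dist_le adj a x z -> dist_le adj b z y -> dist_le adj (a + b) x y.
Proof.
elim: a x => [|a IHa] x; first by move=> /eqP->.
rewrite addSn dist_leS => /orP[xz zy|/existsP[w /andP[xw wz]] zy].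
  by rewrite dist_leS (IHa x xz zy).
by rewrite dist_leS; apply/orP; right; apply/existsP; exists w; rewrite xw (IHa w wz zy).
Qed.

Lemma graph_pow_irr (T : finType) (adj : rel T) r : irreflexive (graph_pow adj r).
Proof. by move=> x; rewrite /graph_pow eqxx. Qed.

Lemma graph_pow_sym (T : finType) (adj : rel T) r :
  symmetric adj -> symmetric (graph_pow adj r).
Proof.
move=> adjC; suff dist_sym x y : dist_le adj r x y -> dist_le adj r y x.
  by move=> x y; rewrite /graph_pow eq_sym; apply/idP/idP => /andP[-> /dist_sym->].
elim: r x y => [|r IHr] x y /=; first by rewrite eq_sym.
case/orP => [/IHr->//|/existsP[z /andP[xz /IHr yz]]].
have zx : dist_le adj 1 z x by rewrite dist_le1 adjC xz orbT.
by have := dist_le_trans yz zx; rewrite addn1.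
Qed.

Lemma independent_graph_pow_le (T : finType) (adj : rel T) r s (I : {set T}) :
  r <= s -> independent (graph_pow adj s) I -> independent (graph_pow adj r) I.
Proof.
move=> rs indI x y Ix Iy; apply: contra (indI x y Ix Iy) => /andP[xy dxy].
by rewrite /graph_pow xy (dist_le_mono rs).
Qed.

Lemma sum_odd_ord m : \sum_(j < m) odd j = m./2.
Proof.
elim: m => [|m IHm]; first by rewrite big_ord0.
by rewrite big_ord_recr /= IHm uphalf_half addnC.
Qed.

Lemma sum_even_ord m : \sum_(j < m) ~~ odd j = uphalf m.
Proof.
elim: m => [|m IHm]; first by rewrite big_ord0.
by rewrite big_ord_recr /= IHm uphalf_half; case: (odd m) => /=; lia.
Qed.

Section GearGraph.

Variable n : nat.

Local Notation V := (gear_vertex n).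
Local Notation hub := (@None ('I_n + 'I_n)).
Local Notation rim k := (@Some ('I_n + 'I_n) (@inl 'I_n 'I_n k)).
Local Notation mid j := (@Some ('I_n + 'I_n) (@inr 'I_n 'I_n j)).
Local Notation gear_pow r := (graph_pow (@gear_adj n) r).

Lemma big_gear (F : V -> nat) :
  \sum_x F x = F hub + \sum_k F (rim k) + \sum_j F (mid j).
Proof.
rewrite ![index_enum _]unlock [@Finite.enum in LHS]unlock /= big_cons big_map.
rewrite -addnA; congr (_ + _).
by rewrite -[\sum_(i <- Finite.enum _) _]/(\sum_(i : 'I_n + 'I_n) F (Some i)) big_sumType.
Qed.

Lemma card_gear (P : pred V) :
  #|[set x | P x]| = P hub + #|[set k | P (rim k)]| + #|[set j | P (mid j)]|.
Proof. by rewrite !card_set_sum big_gear. Qed.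

Lemma existsb_gear (P : pred V) :
  [exists x, P x] = [|| P hub, [exists k, P (rim k)] | [exists j, P (mid j)]].
Proof.
apply/existsP/or3P => [[[[k|j]|] Px]|[Px|/existsP[k Px]|/existsP[j Px]]];
  by [constructor; apply/existsP; exists k | constructor; apply/existsP; exists j
     | constructor | eexists; apply: Px].
Qed.

Lemma gear_adj_sym : symmetric (@gear_adj n).
Proof. by move=> [[k|j]|] [[k'|j']|]. Qed.

(* [ends k j]: v_k is an end of the rim edge subdivided by w_j. *)
Definition ends (k j : 'I_n) := (k == j) || (k == ordS j).

Definition share_end (i j : 'I_n) := [exists k, ends k i && ends k j].

Definition gear_adj2 (x y : V) : bool :=
  match x, y with
  | Some (inl k), Some (inr j) | Some (inr j), Some (inl k) => ends k j
  | Some (inr i), Some (inr j) => share_end i j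
  | _, _ => true
  end.

Definition gear_adj3 (x y : V) : bool :=
  match x, y with
  | Some (inr i), Some (inr j) => share_end i j
  | _, _ => true
  end.

Lemma dist_le_gear2 x y : dist_le (@gear_adj n) 2 x y = gear_adj2 x y.
Proof.
rewrite dist_leS dist_le1; under eq_existsb => z do rewrite dist_le1.
rewrite existsb_gear.
have no_witness (T : finType) : [exists z : T, false] = false by apply/existsP => -[].
case: x => [[k|j]|]; case: y => [[k'|j']|] //=; rewrite ?no_witness ?orbT ?orbF //.
- apply/or3P/idP => [[|//|/existsP[j /andP[kj /orP[/eqP[<-]|//]]]]|kj'] //.
  exact: Or31.
- apply/orP/idP => [[|/existsP[k /andP[kj /orP[/eqP[<-]|//]]]]|kj] //.
  exact: or_introl.
- apply/orP/idP => [[/eqP[<-]|//]|shared]; last by right.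
  by apply/existsP; exists j; rewrite /ends eqxx.
- by apply/existsP; exists j; rewrite eqxx.
- by apply/existsP; exists j'; rewrite eqxx.
Qed.

Lemma dist_le_gear3 x y : dist_le (@gear_adj n) 3 x y = gear_adj3 x y.
Proof.
rewrite dist_leS dist_le_gear2; under eq_existsb => z do rewrite dist_le_gear2.
rewrite existsb_gear.
case: x => [[k|j]|]; case: y => [[k'|j']|] //=; rewrite ?orbT //.
  by apply/orP; right; apply/orP; left; apply/existsP; exists j; rewrite eqxx.
by apply/idP/idP => [/or3P[//|//|/existsP[]]|->].
Qed.

Lemma dist_le_gear4 x y : dist_le (@gear_adj n) 4 x y.
Proof.
rewrite dist_leS dist_le_gear3; under eq_existsb => z do rewrite dist_le_gear3.
rewrite existsb_gear.
case: x => [[k|j]|]; case: y => [[k'|j']|] //=; rewrite ?orbT //.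
by apply/orP; right; apply/orP; left; apply/existsP; exists j; rewrite eqxx.
Qed.

Lemma gear_pow2E x y : gear_pow 2 x y = (x != y) && gear_adj2 x y.
Proof. by rewrite /graph_pow dist_le_gear2. Qed.

Lemma gear_pow3E x y : gear_pow 3 x y = (x != y) && gear_adj3 x y.
Proof. by rewrite /graph_pow dist_le_gear3. Qed.

Lemma gear_pow4E x y : gear_pow 4 x y = (x != y).
Proof. by rewrite /graph_pow dist_le_gear4 andbT. Qed.

Hypothesis n_gt2 : 2 < n.

Lemma val_ordS (i : 'I_n) : ordS i = (if i.+1 == n then 0 else i.+1) :> nat.
Proof.
have := ltn_ord i; rewrite /=; case: eqP => [->|ne] lt_in; first exact: modnn.
by apply: modn_small; lia.
Qed.

Lemma ordS_neq (i : 'I_n) : ordS i != i.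
Proof. by apply/eqP => /(congr1 (@nat_of_ord n)); rewrite val_ordS; case: eqP; lia. Qed.

Lemma ordSS_neq (i : 'I_n) : ordS (ordS i) != i.
Proof.
apply/eqP => /(congr1 (@nat_of_ord n)); rewrite !val_ordS; have := ltn_ord i.
by case: (i.+1 =P n) => [eq_n|_]; rewrite ?eq_n; case: eqP; lia.
Qed.

Lemma eq_ordS (i j : 'I_n) : (i == ordS j) = (ord_pred i == j).
Proof. by rewrite -(inj_eq (@ordS_inj n) (ord_pred i)) ord_predK. Qed.

Lemma card_ends_rim k : #|[set j | ends k j]| = 2.
Proof.
rewrite (_ : [set j | ends k j] = [set k; ord_pred k]).
  by rewrite cards2 eq_sym -eq_ordS eq_sym ordS_neq.
by apply/setP => j; rewrite !inE /ends eq_ordS !(eq_sym j).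
Qed.

Lemma card_ends_mid j : #|[set k | ends k j]| = 2.
Proof.
rewrite (_ : [set k | ends k j] = [set j; ordS j]); first by rewrite cards2 eq_sym ordS_neq.
by apply/setP => k; rewrite !inE.
Qed.

Lemma share_endE i j : share_end i j = [|| i == j, i == ordS j | j == ordS i].
Proof.
apply/existsP/or3P => [[k /andP[/orP[]/eqP-> /orP[]/eqP ij]]|[]/eqP ij].
- by rewrite ij; constructor.
- by rewrite ij; constructor.
- by rewrite -ij; constructor.
- by rewrite (ordS_inj ij); constructor.
- by exists i; rewrite /ends ij !eqxx.
- by exists i; rewrite /ends ij !eqxx orbT.
- by exists j; rewrite /ends ij !eqxx orbT.
Qed.

Lemma card_share_end j : #|[set i | (j != i) && share_end j i]| = 2.
Proof.
rewrite (_ : [set i | _] = [set ordS j; ord_pred j]).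
  by rewrite cards2 eq_sym -eq_ordS eq_sym ordSS_neq.
apply/setP => i; rewrite !inE share_endE.
have [<-|ji] /= := eqVneq j i; last by rewrite eq_ordS orbC (eq_sym (ord_pred j)).
by rewrite (eq_sym j (ord_pred j)) -eq_ordS eq_sym (negPf (ordS_neq j)).
Qed.

Lemma card_rim_neq (k : 'I_n) : #|[set k' | rim k != rim k']| = n.-1.
Proof.
rewrite -[n in RHS]card_ord -(cardsC1 k).
by apply: eq_card => k'; rewrite !inE eq_sym.
Qed.

Lemma degree_gear (adj adj' : rel V) x : adj =2 adj' ->
  degree adj x = adj' x hub + #|[set k | adj' x (rim k)]| + #|[set j | adj' x (mid j)]|.
Proof.
by move=> eq_adj; rewrite /degree -card_gear; apply: eq_card => y; rewrite !inE eq_adj.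
Qed.

Lemma degree_gear2_hub : degree (gear_pow 2) hub = n + n.
Proof. by rewrite (degree_gear _ gear_pow2E) /= cardsT card_ord. Qed.

Lemma degree_gear2_rim k : degree (gear_pow 2) (rim k) = n.+2.
Proof.
rewrite (degree_gear _ gear_pow2E) /= card_ends_rim.
by under eq_finset do rewrite andbT; rewrite card_rim_neq; lia.
Qed.

Lemma degree_gear2_mid j : degree (gear_pow 2) (mid j) = 5.
Proof. by rewrite (degree_gear _ gear_pow2E) /= card_ends_mid card_share_end. Qed.

Lemma degree_gear3_hub : degree (gear_pow 3) hub = n + n.
Proof. by rewrite (degree_gear _ gear_pow3E) /= cardsT card_ord. Qed.

Lemma degree_gear3_rim k : degree (gear_pow 3) (rim k) = n + n.
Proof.
rewrite (degree_gear _ gear_pow3E) /= cardsT card_ord.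
by under eq_finset do rewrite andbT; rewrite card_rim_neq; lia.
Qed.

Lemma degree_gear3_mid j : degree (gear_pow 3) (mid j) = n + 3.
Proof. by rewrite (degree_gear _ gear_pow3E) /= cardsT card_ord card_share_end; lia. Qed.

Lemma degree_gear4 x : degree (gear_pow 4) x = n + n.
Proof.
have -> : n + n = #|V|.-1 by rewrite card_option card_sum card_ord.
rewrite /degree -(cardsC1 x).
by apply: eq_card => y; rewrite !inE gear_pow4E eq_sym.
Qed.

Definition rims (I : {set V}) := [set k | rim k \in I].
Definition mids (I : {set V}) := [set j | mid j \in I].

Lemma sum_gear_in (I : {set V}) (F : V -> nat) du dv dw :
  F hub = du -> (forall k, F (rim k) = dv) -> (forall j, F (mid j) = dw) ->
  \sum_(x in I) F x = (hub \in I) * du + #|rims I| * dv + #|mids I| * dw.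
Proof.
have sum_class (P : pred 'I_n) (G : 'I_n -> nat) c : (forall k, G k = c) ->
    \sum_k (if P k then G k else 0) = #|[set k | P k]| * c.
  move=> Gc; rewrite card_set_sum big_distrl; apply: eq_bigr => k _.
  by rewrite Gc /=; case: (P k); rewrite ?mul1n ?mul0n.
move=> Fhub Frim Fmid; rewrite big_mkcond big_gear Fhub.
rewrite (sum_class (fun k => rim k \in I) (fun k => F (rim k)) _ Frim).
rewrite (sum_class (fun j => mid j \in I) (fun j => F (mid j)) _ Fmid).
by case: (hub \in I); rewrite ?mul1n ?mul0n.
Qed.

Lemma card_rims_setT : #|rims [set: V]| = n.
Proof. by rewrite -[RHS]card_ord; apply: eq_card => k; rewrite !inE. Qed.

Lemma card_mids_setT : #|mids [set: V]| = n.
Proof. by rewrite -[RHS]card_ord; apply: eq_card => k; rewrite !inE. Qed.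

Lemma card_sparse_cycle (J X : {set 'I_n}) :
  {in J, forall j, ordS j \notin J} -> {in J, forall j, (j \notin X) && (ordS j \notin X)} ->
  #|J| + #|J| + #|X| <= n.
Proof.
have cardU (A B : {set 'I_n}) : {in A, forall x, x \notin B} -> #|A :|: B| = #|A| + #|B|.
  move=> AB; rewrite -cardsUI (_ : A :&: B = set0) ?cards0 ?addn0 //.
  by apply/setP => x; rewrite !inE; case Ax: (x \in A); rewrite // (negPf (AB _ Ax)).
move=> sparseJ avoidX; rewrite -{2}(card_imset J (@ordS_inj n)) -cardU; last first.
  by move=> j Jj; apply/imsetP => -[i Ji eq_j]; have := sparseJ i Ji; rewrite -eq_j Jj.
rewrite -cardU; first by have := max_card (mem (J :|: @ordS n @: J :|: X)); rewrite card_ord.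
move=> j /setUP[/avoidX/andP[]//|/imsetP[i Ji ->]].
by have /andP[] := avoidX i Ji.
Qed.

Lemma independent_gear2 I : independent (gear_pow 2) I ->
  [/\ (hub \in I) + #|rims I| <= 1, (hub \in I) * #|mids I| = 0
    & #|mids I| + #|mids I| + #|rims I| <= n].
Proof.
move=> indI; have apart x y : x \in I -> y \in I -> x != y -> ~~ gear_adj2 x y.
  by move=> Ix Iy xy; have := indI x y Ix Iy; rewrite gear_pow2E xy.
have hub_alone : hub \in I -> rims I = set0 /\ mids I = set0.
  by move=> Ihub; split; apply/setP => x; rewrite !inE;
    apply/negbTE/negP => /(apart _ _ Ihub)/(_ isT).
split.
- case Ihub: (hub \in I); first by have [-> _] := hub_alone Ihub; rewrite cards0.
  apply/card_le1_eqP => k k'; rewrite !inE => Ik Ik'.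
  by apply/eqP; apply: contraTT isT => kk'; apply: (apart _ _ Ik Ik'); rewrite eq_sym.
- case Ihub: (hub \in I); last exact: mul0n.
  by have [_ ->] := hub_alone Ihub; rewrite cards0.
apply: card_sparse_cycle => j; rewrite !inE => Ij.
  have jS : mid j != mid (ordS j) by apply: contraNneq (ordS_neq j) => -[<-].
  by apply/negP => Ij'; have := apart _ _ Ij Ij' jS; rewrite /= share_endE eqxx !orbT.
by apply/andP; split; apply/negP => /(apart _ _)/(_ Ij isT); rewrite /= /ends eqxx ?orbT.
Qed.

Lemma independent_gear3 I : independent (gear_pow 3) I -> #|rims I| * #|mids I| = 0.
Proof.
move=> indI; have [->|[k]] := set_0Vmem (rims I); first by rewrite cards0.
rewrite inE => Ik; rewrite (_ : mids I = set0) ?cards0 ?muln0 //.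
apply/setP => j; rewrite !inE; apply/negbTE/negP => Ij.
by have := indI _ _ Ik Ij; rewrite gear_pow3E.
Qed.

Lemma independent_gear4 I : independent (gear_pow 4) I -> #|I| <= 1.
Proof.
move=> indI; apply/card_le1_eqP => x y Ix Iy.
by have := indI x y Ix Iy; rewrite gear_pow4E negbK => /eqP.
Qed.

Definition sparing_gear2 := if odd n then ((n + 1) ^ 2)./2 else ((n + 1) ^ 2 + 5)./2.

Definition sparing_gear3 := if odd n then (2 * n ^ 2 + 3 * n + 3)./2 else n * (n + 1).

Lemma double_sparing_gear2 :
  2 * sparing_gear2 = if odd n then (n + 1) ^ 2 else (n + 1) ^ 2 + 5.
Proof.
rewrite /sparing_gear2 mul2n; case: ifP => odd_n.
  by rewrite even_halfK // oddX addn1 /= odd_n.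
by rewrite even_halfK // oddD oddX addn1 /= odd_n.
Qed.

Lemma double_sparing_gear3 :
  2 * sparing_gear3 = if odd n then 2 * n ^ 2 + 3 * n + 3 else 2 * (n * (n + 1)).
Proof.
rewrite /sparing_gear3; case: ifP => odd_n //.
by rewrite mul2n even_halfK // !oddD !oddM odd_n.
Qed.

Lemma gear2_lower_bound I : independent (gear_pow 2) I ->
  2 * sparing_gear2 + 2 * degree_weight (gear_pow 2) I <=
  degree_weight (gear_pow 2) [set: V].
Proof.
move=> /independent_gear2[]; rewrite /degree_weight.
rewrite !(sum_gear_in _ degree_gear2_hub degree_gear2_rim degree_gear2_mid).
rewrite in_setT card_rims_setT card_mids_setT double_sparing_gear2.
move: (hub \in I) #|rims I| #|mids I| => h a b; have := odd_double_half n.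
by case: h; case: (odd n) => /= n_eq; nia.
Qed.

Lemma gear3_lower_bound I : independent (gear_pow 3) I ->
  2 * sparing_gear3 + 2 * degree_weight (gear_pow 3) I <=
  degree_weight (gear_pow 3) [set: V].
Proof.
move=> indI; have /eqP := independent_gear3 indI.
have [] := independent_gear2 (independent_graph_pow_le (isT : 2 <= 3) indI).
rewrite /degree_weight !(sum_gear_in _ degree_gear3_hub degree_gear3_rim degree_gear3_mid).
rewrite in_setT card_rims_setT card_mids_setT double_sparing_gear3.
move: (hub \in I) #|rims I| #|mids I| => h a b h_a h_b b_a; rewrite muln_eq0.
have n_eq := odd_double_half n; rewrite -muln2 in n_eq.
have b_half : b <= n./2 by case: (odd n) n_eq => /=; lia.
have mids_weight := leq_mul (leqnn (n + 3)) b_half.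
by case/orP => /eqP->; case: h h_a h_b; case: (odd n) n_eq => /= n_eq; nia.
Qed.

Lemma degree_weight_gear4 I : degree_weight (gear_pow 4) I = #|I| * (n + n).
Proof.
by rewrite /degree_weight -sum_nat_const; apply: eq_bigr => x _; apply: degree_gear4.
Qed.

Lemma gear4_lower_bound I : independent (gear_pow 4) I ->
  2 * (n * (2 * n - 1)) + 2 * degree_weight (gear_pow 4) I <=
  degree_weight (gear_pow 4) [set: V].
Proof.
move=> /independent_gear4; rewrite !degree_weight_gear4 cardsT card_option card_sum card_ord.
by case: #|I| => [|[|//]] _; nia.
Qed.

Lemma card_ord_succ_lt (P : pred nat) :
  #|[set j : 'I_n | P j && (j.+1 < n)]| = \sum_(j < n.-1) P j.
Proof.
rewrite card_set_sum (big_ord_widen _ (fun j => P j : nat) (leq_pred n)) [RHS]big_mkcond /=.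
apply: eq_bigr => j _; rewrite (_ : j < n.-1 = (j.+1 < n)); last by apply/idP/idP; lia.
by case: (P j); case: (j.+1 < n).
Qed.

Lemma same_parity_apart (i j : 'I_n) : odd i = odd j -> i.+1 < n -> j.+1 < n ->
  i != j -> ~~ share_end i j.
Proof.
move=> ij_odd i_lt j_lt ij; rewrite share_endE (negPf ij) /=.
have succ_parity (a b : 'I_n) : a.+1 < n -> b = ordS a -> odd b = ~~ odd a.
  by move=> a_lt /(congr1 (@nat_of_ord n)); rewrite val_ordS ltn_eqF // => ->.
apply/norP; split; apply/negP => /eqP/succ_parity.
  by move/(_ j_lt); rewrite ij_odd; case: (odd j).
by move/(_ i_lt); rewrite ij_odd; case: (odd j).
Qed.

Definition witness2 : {set V} :=
  [set x : V | match x with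
           | Some (inl k) => k == 0 :> nat
           | Some (inr j) => odd j && (j.+1 < n)
           | None => false
           end].

Lemma independent_witness2 : independent (gear_pow 2) witness2.
Proof.
have rim0_apart (k j : 'I_n) : k = 0 :> nat -> odd j -> j.+1 < n -> ~~ ends k j.
  move=> k0 j_odd j_lt; apply/norP; split; apply/eqP => /(congr1 (@nat_of_ord n)).
    by rewrite k0 => j0; rewrite -j0 in j_odd.
  by rewrite val_ordS ltn_eqF // k0.
move=> [[k|i]|] [[k'|j]|]; rewrite !inE //= gear_pow2E /=.
- move=> /eqP k0 /eqP k0'; rewrite andbT negbK (_ : k = k') //.
  by apply: val_inj; rewrite /= k0 k0'.
- by move=> /eqP k0 /andP[]; apply: rim0_apart.
- by move=> /andP[i_odd i_lt] /eqP k0; apply: rim0_apart.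
move=> /andP[i_odd i_lt] /andP[j_odd j_lt]; have [->|ij] := eqVneq i j.
  by rewrite eqxx.
by rewrite (negPf (same_parity_apart _ i_lt j_lt ij)) ?andbF // i_odd j_odd.
Qed.

Lemma witness2_optimal :
  2 * sparing_gear2 + 2 * degree_weight (gear_pow 2) witness2 =
  degree_weight (gear_pow 2) [set: V].
Proof.
rewrite /degree_weight !(sum_gear_in _ degree_gear2_hub degree_gear2_rim degree_gear2_mid).
rewrite in_setT card_rims_setT card_mids_setT double_sparing_gear2.
have -> : hub \in witness2 = false by rewrite inE.
have -> : #|rims witness2| = 1.
  apply/eqP/cards1P; exists (Ordinal (ltnW (ltnW n_gt2))).
  by apply/setP => k; rewrite !inE.
have -> : #|mids witness2| = n.-1./2.
  by rewrite -sum_odd_ord -card_ord_succ_lt; apply: eq_card => j; rewrite !inE.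
have [m n_eq] : exists m, n = m.+1 by exists n.-1; lia.
have := odd_double_half m; rewrite n_eq /=.
by case: (odd m) => /= m_eq; nia.
Qed.

Definition witness3 : {set V} :=
  [set x : V | if x is Some (inr j) then ~~ odd j && (j.+1 < n) else false].

Lemma independent_witness3 : independent (gear_pow 3) witness3.
Proof.
move=> [[k|i]|] [[k'|j]|]; rewrite !inE //= gear_pow3E /=.
move=> /andP[i_even i_lt] /andP[j_even j_lt]; have [->|ij] := eqVneq i j.
  by rewrite eqxx.
by rewrite (negPf (same_parity_apart _ i_lt j_lt ij)) ?andbF // (negPf i_even) (negPf j_even).
Qed.

Lemma witness3_optimal :
  2 * sparing_gear3 + 2 * degree_weight (gear_pow 3) witness3 =
  degree_weight (gear_pow 3) [set: V].
Proof.
rewrite /degree_weight !(sum_gear_in _ degree_gear3_hub degree_gear3_rim degree_gear3_mid).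
rewrite in_setT card_rims_setT card_mids_setT double_sparing_gear3.
have -> : hub \in witness3 = false by rewrite inE.
have -> : #|rims witness3| = 0.
  by apply/eqP; rewrite cards_eq0; apply/eqP/setP => k; rewrite !inE.
have -> : #|mids witness3| = n./2.
  have -> : n./2 = uphalf n.-1 by rewrite -[n in LHS](@prednK n) // ltnW // ltnW.
  rewrite -sum_even_ord -(card_ord_succ_lt (fun j => ~~ odd j)).
  by apply: eq_card => j; rewrite !inE.
have := odd_double_half n.
by case: (odd n) => /= n_eq; nia.
Qed.

Lemma independent_witness4 : independent (gear_pow 4) [set hub].
Proof. by move=> x y; rewrite !inE gear_pow4E => /eqP-> /eqP->. Qed.

Lemma witness4_optimal :
  2 * (n * (2 * n - 1)) + 2 * degree_weight (gear_pow 4) [set hub] =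
  degree_weight (gear_pow 4) [set: V].
Proof.
rewrite !degree_weight_gear4 cards1 cardsT card_option card_sum card_ord; nia.
Qed.

End GearGraph.

Theorem mainTheorem10 (n : nat) (hn : 3 <= n) :
  [/\ sparing_number_is (graph_pow (@gear_adj n) 2)
        (if odd n then ((n + 1) ^ 2)./2 else ((n + 1) ^ 2 + 5)./2),
      sparing_number_is (graph_pow (@gear_adj n) 3)
        (if odd n then (2 * n ^ 2 + 3 * n + 3)./2 else n * (n + 1)) &
      sparing_number_is (graph_pow (@gear_adj n) 4) (n * (2 * n - 1))].
Proof.
have pow_sym r := graph_pow_sym r (@gear_adj_sym n).
split; apply: sparing_number_from_weights (graph_pow_irr _ _) (pow_sym _) _ _.
- by exists (witness2 n); [apply: independent_witness2 | apply: witness2_optimal].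
- exact: gear2_lower_bound.
- by exists (witness3 n); [apply: independent_witness3 | apply: witness3_optimal].
- exact: gear3_lower_bound.
- by exists [set None]; [apply: independent_witness4 | apply: witness4_optimal].
- exact: gear4_lower_bound.
Qed.
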